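(* Assume A2. Let $0w1$ be a valid word (with $w$ a possibly empty word). Then for $x\in\mathcal I$: $0w1$ is the $x$-threshold word if and only if $x\in[y_{01w},y_{10w}]$. Moreover, if $x\in\mathcal I$ and $x\ge y_0$, then the $x$-threshold word is $0$; if $x\in\mathcal I$ and $x\le y_1$, then the $x$-threshold word is $1$.
   Context: Words are finite strings over $\{0,1\}$; $\epsilon$ is the empty word, $w^\omega$ the infinite repetition of $w$. Let $\mathcal I\subseteq\mathbb R$ be an interval and $\phi_0,\phi_1:\mathcal I\to\mathcal I$. For a word $w$ put $\phi_w:=\phi_{w_{|w|}}\circ\cdots\circ\phi_{w_1}$ (first letter applied first), $\phi_\epsilon=\mathrm{id}$. Assumption A2: for all $x<y$ in $\mathcal I$ and $k\in\{0,1\}$, $\phi_k(x)<\phi_k(y)$ and $\phi_k(y)-\phi_k(x)<y-x$; moreover $\phi_0,\phi_1$ have fixed points $y_0,y_1\in\mathcal I$ with $y_1<y_0$. Under A2, for every non-empty word $u$ the map $\phi_u$ has a unique fixed point in $\mathcal I$, denoted $y_u$. The $x$-threshold orbit is the sequence $(x_k)_{k\ge1}$ with $x_1=\phi_1(x)$ and $x_{k+1}=\phi_1(x_k)$ if $x_k\ge x$, $x_{k+1}=\phi_0(x_k)$ if $x_k<x$. The $x$-threshold word is the shortest non-empty finite word $\pi$ such that $x_{k+1}=\phi_{(\pi^\omega)_k}(x_k)$ for all $k\ge1$, when such a word exists. For $p\ge1$, $L_p,R_p$ are the word morphisms determined by $L_p(0)=0^{p+1}1$, $L_p(1)=0^p1$,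 $R_p(0)=01^p$, $R_p(1)=01^{p+1}$. The set of valid words is the smallest set of words containing $0$ and $1$ and closed under $L_p$ and $R_p$ for all $p\ge1$; every valid word other than $0,1$ has the form $0w1$. *)

From Stdlib Require Import Reals List Arith.
Import ListNotations.
Open Scope R_scope.

(* Words over {0,1}: false = letter 0, true = letter 1. *)
Definition word := list bool.

Definition phik (phi0 phi1 : R -> R) (b : bool) : R -> R :=
  if b then phi1 else phi0.

(* phi_w = phi_{w_|w|} o ... o phi_{w_1}: first letter applied first. *)
Definition phiw (phi0 phi1 : R -> R) (w : word) (x : R) : R :=
  fold_left (fun acc b => phik phi0 phi1 b acc) w x.

Definition is_interval (I : R -> Prop) : Prop :=
  forall a b c, I a -> I c -> a <= b -> b <= c -> I b.

Definition A2 (I : R -> Prop) (phi0 phi1 : R -> R) (y0 y1 : R) : Prop :=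
  (forall k x, I x -> I (phik phi0 phi1 k x)) /\
  (forall k x y, I x -> I y -> x < y ->
      phik phi0 phi1 k x < phik phi0 phi1 k y /\
      phik phi0 phi1 k y - phik phi0 phi1 k x < y - x) /\
  I y0 /\ phi0 y0 = y0 /\ I y1 /\ phi1 y1 = y1 /\ y1 < y0.

Definition is_fixpt (I : R -> Prop) (phi0 phi1 : R -> R) (u : word) (y : R) : Prop :=
  I y /\ phiw phi0 phi1 u y = y.

(* x-threshold orbit: orbit n = x_{n+1}; x_1 = phi_1 x,
   x_{k+1} = phi_1 x_k if x_k >= x, phi_0 x_k if x_k < x. *)
Fixpoint orbit (phi0 phi1 : R -> R) (x : R) (n : nat) : R :=
  match n with
  | O => phi1 x
  | S m => let xm := orbit phi0 phi1 x m in
           if Rle_dec x xm then phi1 xm else phi0 xm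
  end.

(* (pi^omega)_k for k >= 1 is nth ((k-1) mod |pi|) pi;
   the condition x_{k+1} = phi_{(pi^omega)_k}(x_k) for all k >= 1. *)
Definition follows (phi0 phi1 : R -> R) (x : R) (pi : word) : Prop :=
  forall n : nat,
    orbit phi0 phi1 x (S n) =
    phik phi0 phi1 (nth (Nat.modulo n (length pi)) pi false) (orbit phi0 phi1 x n).

Definition threshold_word (phi0 phi1 : R -> R) (x : R) (pi : word) : Prop :=
  pi <> [] /\ follows phi0 phi1 x pi /\
  (forall pi', pi' <> [] -> follows phi0 phi1 x pi' -> (length pi <= length pi')%nat).

Definition Lp_letter (p : nat) (b : bool) : word :=
  if b then repeat false p ++ [true] else repeat false (S p) ++ [true].
Definition Rp_letter (p : nat) (b : bool) : word :=
  if b then false :: repeat true (S p) else false :: repeat true p.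
Definition Lp (p : nat) (w : word) : word := flat_map (Lp_letter p) w.
Definition Rp (p : nat) (w : word) : word := flat_map (Rp_letter p) w.

Inductive valid : word -> Prop :=
  | valid0 : valid [false]
  | valid1 : valid [true]
  | validL : forall p w, (1 <= p)%nat -> valid w -> valid (Lp p w)
  | validR : forall p w, (1 <= p)%nat -> valid w -> valid (Rp p w).

From Stdlib Require Import Reals List Lra Lia Arith Bool.
Import ListNotations.
Open Scope R_scope.

(* Under A2 every periodic point lies in [[y1, y0]], where [phi_0] moves points right
   and [phi_1] moves them left. For a valid word [0w1], the cycle of the fixed point [b]
   of [phi_{10w}] has its points followed by [0] at or left of the fixed point [a] of
   [phi_{01w}] and its points followed by [1] at or right of [b]. This gap property is
   proved by induction along [L_p] and [R_p]: the maps [phi_{L_p(k)}], [phi_{R_p(k)}]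
   again satisfy A2, and their cycles are the cycles of [phi] read at block boundaries.
   For [a <= x <= b] the threshold orbit of [x] stays within [b - x] below that cycle
   and therefore reads the same letters; conversely an orbit following [0w1] gives
   [x <= b] at the point read after [0w], and [a <= x] because the contraction towards
   [a] would otherwise push the orbit past [x]. Minimality holds because [phi_0] and
   [phi_1] differ on [[y1, y0]], so a shorter word would be a period of [0w1], while
   valid words are primitive: their letter counts are coprime. *)

(** * Words and cycles *)

Lemma repeat_app_cons {T} (x : T) n l : repeat x n ++ x :: l = x :: repeat x n ++ l.
Proof. induction n as [|n IH]; simpl; [reflexivity|now rewrite IH]. Qed.

Lemma repeat_snoc_eq_app_cons {T} (x y : T) m r c r' :
  repeat x m ++ [y] = r ++ c :: r' ->
  (r = repeat x m /\ c = y) \/ (exists i, (i < m)%nat /\ r = repeat x i /\ c = x).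
Proof.
  intros H. destruct (app_eq_app _ _ _ _ H) as [l [[E1 E2]|[E1 E2]]].
  - destruct l as [|d l]; simpl in E2.
    + rewrite app_nil_r in E1. injection E2 as -> _. now left.
    + injection E2 as -> _. right. pose proof (f_equal (@length T) E1) as Hlen.
      rewrite repeat_length, length_app in Hlen. simpl in Hlen.
      apply repeat_eq_elt in E1 as [-> [Hr _]]. exists (length r). split; [lia|auto].
  - destruct l as [|d l]; simpl in E2.
    + rewrite app_nil_r in E1. injection E2 as -> _. now left.
    + injection E2 as _ E2. now destruct l.
Qed.

Lemma cons_repeat_eq_app_cons {T} (x y : T) m r c r' :
  x :: repeat y m = r ++ c :: r' ->
  (r = [] /\ c = x) \/ (exists i, (i < m)%nat /\ r = x :: repeat y i /\ c = y).
Proof.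
  destruct r as [|d r]; simpl; intros H; injection H as -> H; [now left|].
  right. pose proof (f_equal (@length T) H) as Hlen.
  rewrite repeat_length, length_app in Hlen. simpl in Hlen.
  apply repeat_eq_elt in H as [-> [Hr _]]. exists (length r). split; [lia|now rewrite Hr].
Qed.

Lemma firstn_S_nth {T} (l : list T) k d : (k < length l)%nat ->
  firstn (S k) l = firstn k l ++ [nth k l d].
Proof.
  revert k; induction l as [|x l IH]; intros k H; simpl in *; [lia|].
  destruct k; [reflexivity|]. rewrite firstn_cons. simpl. f_equal. apply IH. lia.
Qed.

Lemma phiw_app p0 p1 u v x : phiw p0 p1 (u ++ v) x = phiw p0 p1 v (phiw p0 p1 u x).
Proof. unfold phiw. now rewrite fold_left_app. Qed.

Lemma phiw_repeat_S_r p0 p1 c n x :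
  phiw p0 p1 (repeat c (S n)) x = phik p0 p1 c (phiw p0 p1 (repeat c n) x).
Proof. change (repeat c (S n)) with (c :: repeat c n). now rewrite repeat_cons, phiw_app. Qed.

Lemma phiw_flat_map p0 p1 (g : bool -> word) u x :
  phiw (phiw p0 p1 (g false)) (phiw p0 p1 (g true)) u x = phiw p0 p1 (flat_map g u) x.
Proof.
  revert x; induction u as [|c u IH]; intros x; [reflexivity|].
  cbn [flat_map]. rewrite phiw_app, <- IH. now destruct c.
Qed.

Lemma continuity_of_Lipschitz (F : R -> R) (K : R) :
  0 < K -> (forall x y, Rabs (F x - F y) <= K * Rabs (x - y)) -> continuity F.
Proof.
  intros HK HF x eps Heps. exists (eps / K). split; [apply Rdiv_lt_0_compat; lra|].
  intros y [_ Hy]. simpl in *. unfold R_dist in *.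
  eapply Rle_lt_trans; [apply HF|].
  apply Rmult_lt_compat_l with (r := K) in Hy; [|lra].
  replace (K * (eps / K)) with eps in Hy by (field; lra). lra.
Qed.

(* [z] is the point of the periodic [u]-orbit of [p] that is followed by the letter [c]. *)
Definition cycle_point p0 p1 (u : word) (p z : R) (c : bool) : Prop :=
  exists s t, u = s ++ c :: t /\ z = phiw p0 p1 s p.

Lemma cycle_point_rot p0 p1 s1 s2 p z c :
  phiw p0 p1 (s1 ++ s2) p = p -> cycle_point p0 p1 (s1 ++ s2) p z c ->
  cycle_point p0 p1 (s2 ++ s1) (phiw p0 p1 s1 p) z c.
Proof.
  intros Hp [s [t [Hu ->]]].
  destruct (app_eq_app _ _ _ _ Hu) as [l [[E1 E2]|[E1 E2]]].
  - destruct l as [|c' l']; simpl in E2.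
    + rewrite app_nil_r in E1. subst. now exists [], (t ++ s).
    + injection E2 as <- ->. subst s1. exists (s2 ++ s), l'. split.
      * now rewrite <- app_assoc.
      * now rewrite phiw_app, <- (phiw_app _ _ (s ++ c :: l') s2), Hp.
  - subst. exists l, (t ++ s1). split; [now rewrite <- app_assoc|apply phiw_app].
Qed.

Lemma cycle_point_succ p0 p1 u p z c :
  phiw p0 p1 u p = p -> cycle_point p0 p1 u p z c ->
  exists c', cycle_point p0 p1 u p (phik p0 p1 c z) c'.
Proof.
  intros Hp [s [t [Hu ->]]]. destruct t as [|c' t].
  - subst u. change (phik p0 p1 c (phiw p0 p1 s p)) with (phiw p0 p1 [c] (phiw p0 p1 s p)).
    rewrite <- phiw_app, Hp. destruct s as [|d s].
    + exists c, [], []. now split.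
    + exists d, [], (s ++ [c]). now split.
  - exists c', (s ++ [c]), t. subst. split; [now rewrite <- app_assoc|].
    now rewrite phiw_app.
Qed.

Lemma flat_map_eq_app_cons (g : bool -> word) x s c t :
  flat_map g x = s ++ c :: t ->
  exists s' c' t' r r', x = s' ++ c' :: t' /\ g c' = r ++ c :: r' /\ s = flat_map g s' ++ r.
Proof.
  revert s; induction x as [|d x IH]; intros s H; simpl in H; [now destruct s|].
  destruct (app_eq_app _ _ _ _ H) as [l [[E1 E2]|[E1 E2]]].
  - destruct l as [|c' l']; simpl in E2.
    + rewrite app_nil_r in E1. subst s.
      destruct (IH [] (eq_sym E2)) as [s' [c'' [t' [r [r' [-> [H2 H3]]]]]]].
      exists (d :: s'), c'', t', r, r'. repeat split; auto.
      simpl. now rewrite <- app_assoc, <- H3, app_nil_r.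
    + injection E2 as -> ->. now exists [], d, x, s, l'.
  - destruct (IH l E2) as [s' [c'' [t' [r [r' [-> [H2 ->]]]]]]].
    exists (d :: s'), c'', t', r, r'. subst. repeat split; auto.
    simpl. now rewrite app_assoc.
Qed.

Section Renormalization.
Variables (p0 p1 : R -> R) (g : bool -> word).
Notation psi0 := (phiw p0 p1 (g false)).
Notation psi1 := (phiw p0 p1 (g true)).

(* Cycles of the renormalized maps [psi_k = phi_{g k}] are cycles of [phi] sampled at
   the block boundaries of [flat_map g]. *)
Lemma cycle_point_flat_map x p z c :
  cycle_point p0 p1 (flat_map g x) p z c ->
  exists B c' r r', cycle_point psi0 psi1 x p B c' /\
    g c' = r ++ c :: r' /\ z = phiw p0 p1 r B.
Proof.
  intros [s [t [Hu ->]]].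
  destruct (flat_map_eq_app_cons g x s c t Hu) as [s' [c' [t' [r [r' [-> [Hg ->]]]]]]].
  exists (phiw p0 p1 (flat_map g s') p), c', r, r'. repeat split.
  - exists s', t'. split; [reflexivity|]. symmetry. apply phiw_flat_map.
  - exact Hg.
  - apply phiw_app.
Qed.

Lemma flat_map_cycle_point x p B c' r c r' :
  cycle_point psi0 psi1 x p B c' -> g c' = r ++ c :: r' ->
  cycle_point p0 p1 (flat_map g x) p (phiw p0 p1 r B) c.
Proof.
  intros [s [t [-> ->]]] Hg. exists (flat_map g s ++ r), (r' ++ flat_map g t). split.
  - rewrite flat_map_app. simpl. rewrite Hg, <- !app_assoc. reflexivity.
  - now rewrite phiw_app, phiw_flat_map.
Qed.

Lemma cycle_point_renormalize x u v b' z c :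
  v ++ u = flat_map g x -> phiw psi0 psi1 x b' = b' ->
  cycle_point p0 p1 (u ++ v) (phiw p0 p1 v b') z c ->
  exists B c' r r', cycle_point psi0 psi1 x b' B c' /\
    g c' = r ++ c :: r' /\ z = phiw p0 p1 r B.
Proof.
  intros Hvu Hb' Hz. rewrite phiw_flat_map, <- Hvu in Hb'.
  apply cycle_point_rot in Hz; [|now rewrite phiw_app, <- (phiw_app _ _ v u), Hb'].
  rewrite <- phiw_app, Hb', Hvu in Hz. now apply cycle_point_flat_map.
Qed.

Lemma cycle_point_unrenormalize x u v b' B c' r c r' :
  v ++ u = flat_map g x -> phiw psi0 psi1 x b' = b' ->
  cycle_point psi0 psi1 x b' B c' -> g c' = r ++ c :: r' ->
  cycle_point p0 p1 (u ++ v) (phiw p0 p1 v b') (phiw p0 p1 r B) c.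
Proof.
  intros Hvu Hb' HB Hg. pose proof (flat_map_cycle_point x b' B c' r c r' HB Hg) as H.
  rewrite phiw_flat_map, <- Hvu in Hb'. rewrite <- Hvu in H.
  now apply cycle_point_rot.
Qed.
End Renormalization.

(* The invariant behind the threshold words: for the fixed points [a] of [phi_{01w}] and
   [b] of [phi_{10w}], the points of the [10w]-cycle of [b] followed by [0] lie left of
   [[a, b]] and those followed by [1] lie right of it; [a] is itself on that cycle. The
   outer bounds [phi_1 b <= z <= phi_0 a] are only needed to carry the induction. *)
Definition cycle_gap (I : R -> Prop) p0 p1 (w : word) : Prop :=
  forall a b, I a -> I b ->
    phiw p0 p1 (false :: true :: w) a = a ->
    phiw p0 p1 (true :: false :: w) b = b ->
    a < b /\ cycle_point p0 p1 (true :: false :: w) b a false /\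
    forall z c, cycle_point p0 p1 (true :: false :: w) b z c ->
      (c = false -> z <= a) /\ (c = true -> b <= z) /\ p1 b <= z /\ z <= p0 a.

(* [letter pi k] is the letter [(pi^omega)_(k+1)] of the statement. *)
Definition letter (pi : word) (k : nat) : bool := nth (k mod length pi) pi false.

Definition is_period (pi : word) (m : nat) : Prop := forall k, letter pi (k + m) = letter pi k.

Fixpoint traj p0 p1 (f : nat -> bool) (z : R) (k : nat) : R :=
  match k with O => z | S k => phik p0 p1 (f k) (traj p0 p1 f z k) end.

Lemma follows_orbit_traj p0 p1 x pi k :
  follows p0 p1 x pi -> orbit p0 p1 x k = traj p0 p1 (letter pi) (p1 x) k.
Proof. intros Hf. induction k as [|k IH]; [reflexivity|]. now rewrite Hf, IH. Qed.

Lemma traj_add p0 p1 f z k m :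
  traj p0 p1 f z (k + m) = phiw p0 p1 (map (fun i => f (k + i)%nat) (seq 0 m)) (traj p0 p1 f z k).
Proof.
  induction m as [|m IH]; [now rewrite Nat.add_0_r|].
  rewrite Nat.add_succ_r, seq_S, map_app, phiw_app. simpl. now rewrite IH.
Qed.

Lemma is_period_mul pi m j k : is_period pi m -> letter pi (k + j * m) = letter pi k.
Proof.
  intros Hm. induction j as [|j IH]; [now rewrite Nat.add_0_r|].
  now rewrite Nat.mul_succ_l, Nat.add_assoc, Hm.
Qed.

Section Letters.
Variable pi : word.
Hypothesis Hpi : pi <> [].

Lemma length_pos : length pi <> 0%nat.
Proof. now destruct pi. Qed.

Lemma letter_lt k : (k < length pi)%nat -> letter pi k = nth k pi false.
Proof. intros Hk. unfold letter. now rewrite Nat.mod_small. Qed.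

Lemma letter_add_mul k j : letter pi (k + j * length pi) = letter pi k.
Proof. unfold letter. now rewrite Nat.Div0.mod_add. Qed.

Lemma letter_mod k : letter pi (k mod length pi) = letter pi k.
Proof. unfold letter. now rewrite Nat.Div0.mod_mod. Qed.

Variables (p0 p1 : R -> R).
Notation traj_pi := (traj p0 p1 (letter pi)).

Lemma traj_letter_firstn z k : (k <= length pi)%nat -> traj_pi z k = phiw p0 p1 (firstn k pi) z.
Proof.
  induction k as [|k IH]; intros Hk; [reflexivity|]. cbn [traj]. rewrite IH by lia.
  rewrite (firstn_S_nth pi k false) by lia. rewrite letter_lt by lia. now rewrite phiw_app.
Qed.

Variable z0 : R.
Hypothesis Hz0 : phiw p0 p1 pi z0 = z0.

Lemma traj_letter_period k : traj_pi z0 (k + length pi) = traj_pi z0 k.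
Proof.
  induction k as [|k IH]; simpl.
  - rewrite traj_letter_firstn, firstn_all; auto.
  - rewrite IH. f_equal. rewrite <- (letter_add_mul k 1). f_equal. lia.
Qed.

Lemma traj_letter_mod k : traj_pi z0 k = traj_pi z0 (k mod length pi).
Proof.
  rewrite (Nat.div_mod_eq k (length pi)) at 1. rewrite Nat.add_comm, Nat.mul_comm.
  induction (k / length pi)%nat as [|j IH]; [now rewrite Nat.add_0_r|].
  now rewrite Nat.mul_succ_l, Nat.add_assoc, traj_letter_period.
Qed.

Lemma cycle_point_traj_letter k : cycle_point p0 p1 pi z0 (traj_pi z0 k) (letter pi k).
Proof.
  pose proof (Nat.mod_upper_bound k (length pi) length_pos) as Hr.
  destruct (nth_split pi false Hr) as [s [t [Hpi_eq Hs]]].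
  exists s, t. rewrite <- letter_mod, letter_lt by exact Hr. split; [exact Hpi_eq|].
  rewrite traj_letter_mod, traj_letter_firstn, <- Hs by lia. rewrite Hpi_eq.
  rewrite <- (Nat.add_0_r (length s)), firstn_app_2. simpl. now rewrite app_nil_r.
Qed.
End Letters.

(** * Contractions satisfying A2 *)

Section Contraction.
Variables (I : R -> Prop) (phi0 phi1 : R -> R) (y0 y1 : R).
Hypothesis HI : is_interval I.
Hypothesis HA : A2 I phi0 phi1 y0 y1.

Notation phi := (phik phi0 phi1).
Notation Phi := (phiw phi0 phi1).

Lemma phi_in c x : I x -> I (phi c x).
Proof. destruct HA as [H _]. auto. Qed.

Lemma phi_lt c x y : I x -> I y -> x < y -> phi c x < phi c y.
Proof. destruct HA as [_ [H _]]. intros. now apply H. Qed.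

Lemma phi_contract c x y : I x -> I y -> x < y -> phi c y - phi c x < y - x.
Proof. destruct HA as [_ [H _]]. intros. now apply H. Qed.

Lemma y0_in : I y0. Proof. apply HA. Qed.
Lemma y1_in : I y1. Proof. apply HA. Qed.
Lemma phi0_y0 : phi0 y0 = y0. Proof. apply HA. Qed.
Lemma phi1_y1 : phi1 y1 = y1. Proof. apply HA. Qed.
Lemma y1_lt_y0 : y1 < y0. Proof. apply HA. Qed.

Lemma Phi_in u x : I x -> I (Phi u x).
Proof. revert x; induction u; intros x Hx; simpl; auto using phi_in. Qed.

Lemma Phi_lt u x y : I x -> I y -> x < y -> Phi u x < Phi u y.
Proof. revert x y; induction u; intros; simpl; auto using phi_in, phi_lt. Qed.

Lemma Phi_le u x y : I x -> I y -> x <= y -> Phi u x <= Phi u y.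
Proof. intros Hx Hy [Hxy| ->]; [left; now apply Phi_lt|lra]. Qed.

Lemma Phi_le_inv u x y : I x -> I y -> Phi u x <= Phi u y -> x <= y.
Proof.
  intros Hx Hy H. destruct (Rle_lt_dec x y) as [|Hyx]; auto.
  pose proof (Phi_lt u y x Hy Hx Hyx). lra.
Qed.

Lemma Phi_inj u x y : I x -> I y -> Phi u x = Phi u y -> x = y.
Proof. intros Hx Hy H. apply Rle_antisym; apply (Phi_le_inv u); auto; lra. Qed.

Lemma Phi_contract u x y : I x -> I y -> x <= y -> Phi u y - Phi u x <= y - x.
Proof.
  revert x y; induction u as [|c u IH]; intros x y Hx Hy [Hxy| ->]; simpl; try lra.
  pose proof (phi_contract c x y Hx Hy Hxy). pose proof (phi_lt c x y Hx Hy Hxy).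
  pose proof (IH (phi c x) (phi c y) (phi_in c x Hx) (phi_in c y Hy) ltac:(lra)). lra.
Qed.

Lemma Phi_contract_strict u x y : u <> [] -> I x -> I y -> x < y ->
  Phi u y - Phi u x < y - x.
Proof.
  destruct u as [|c u]; [easy|]. intros _ Hx Hy Hxy. simpl.
  pose proof (phi_contract c x y Hx Hy Hxy). pose proof (phi_lt c x y Hx Hy Hxy).
  pose proof (Phi_contract u (phi c x) (phi c y) (phi_in c x Hx) (phi_in c y Hy)). lra.
Qed.

Lemma Phi_fixpt_unique u a a' : u <> [] -> I a -> I a' ->
  Phi u a = a -> Phi u a' = a' -> a = a'.
Proof.
  intros Hu Ha Ha' Fa Fa'. destruct (Rtotal_order a a') as [H|[H|H]]; auto.
  - pose proof (Phi_contract_strict u a a' Hu Ha Ha' H). lra.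
  - pose proof (Phi_contract_strict u a' a Hu Ha' Ha H). lra.
Qed.

Lemma le_Phi_fixpt u x b : u <> [] -> I x -> I b -> Phi u b = b -> x <= Phi u x -> x <= b.
Proof.
  intros Hu Hx Hb Fb H. destruct (Rle_lt_dec x b) as [|Hbx]; auto.
  pose proof (Phi_contract_strict u b x Hu Hb Hx Hbx). lra.
Qed.

Lemma phi0_ge z : I z -> z <= y0 -> z <= phi0 z.
Proof.
  intros Hz [H| ->]; [|rewrite phi0_y0; lra].
  pose proof (phi_contract false z y0 Hz y0_in H). simpl in *. rewrite phi0_y0 in *. lra.
Qed.

Lemma phi0_gt z : I z -> z < y0 -> z < phi0 z.
Proof.
  intros Hz H. pose proof (phi_contract false z y0 Hz y0_in H). simpl in *.
  rewrite phi0_y0 in *. lra.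
Qed.

Lemma phi1_le z : I z -> y1 <= z -> phi1 z <= z.
Proof.
  intros Hz [H| <-]; [|rewrite phi1_y1; lra].
  pose proof (phi_contract true y1 z y1_in Hz H). simpl in *. rewrite phi1_y1 in *. lra.
Qed.

Lemma phi1_lt z : I z -> y1 < z -> phi1 z < z.
Proof.
  intros Hz H. pose proof (phi_contract true y1 z y1_in Hz H). simpl in *.
  rewrite phi1_y1 in *. lra.
Qed.

Definition core z := y1 <= z <= y0.

Lemma core_in z : core z -> I z.
Proof. intros [H1 H2]. exact (HI y1 z y0 y1_in y0_in H1 H2). Qed.

Lemma phi_core c z : core z -> core (phi c z).
Proof.
  intros Hc. pose proof (core_in z Hc) as Hz. destruct Hc as [H1 H0].
  pose proof y1_lt_y0.
  destruct c; simpl; split.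
  - pose proof (Phi_le [true] y1 z y1_in Hz H1). simpl in *. rewrite phi1_y1 in *. lra.
  - pose proof (phi1_le z Hz H1). lra.
  - pose proof (phi0_ge z Hz H0). lra.
  - pose proof (Phi_le [false] z y0 Hz y0_in H0). simpl in *. rewrite phi0_y0 in *. lra.
Qed.

Lemma Phi_core u z : core z -> core (Phi u z).
Proof. revert z; induction u; intros; simpl; auto using phi_core. Qed.

Lemma phi0_neq_phi1 z : core z -> phi0 z <> phi1 z.
Proof.
  intros Hc. pose proof (core_in z Hc) as Hz. destruct Hc as [H1 H0].
  destruct H1 as [H1| <-].
  - pose proof (phi1_lt z Hz H1). pose proof (phi0_ge z Hz H0). lra.
  - rewrite phi1_y1. pose proof (phi0_gt y1 y1_in y1_lt_y0). lra.
Qed.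

Lemma phi_lt_self_above c z : I z -> y0 < z -> phi c z < z.
Proof.
  intros Hz H. destruct c; simpl.
  - apply phi1_lt; auto. pose proof y1_lt_y0. lra.
  - pose proof (phi_contract false y0 z y0_in Hz H). simpl in *. rewrite phi0_y0 in *. lra.
Qed.

Lemma phi_gt_self_below c z : I z -> z < y1 -> z < phi c z.
Proof.
  intros Hz H. destruct c; simpl.
  - pose proof (phi_contract true z y1 Hz y1_in H). simpl in *. rewrite phi1_y1 in *. lra.
  - apply phi0_gt; auto. pose proof y1_lt_y0. lra.
Qed.

Lemma Phi_lt_above u s t : I s -> y0 < t -> s < t -> Phi u s < t.
Proof.
  revert s; induction u as [|c u IH]; intros s Hs Ht Hst; simpl; auto.
  apply IH; auto using phi_in. destruct (Rle_lt_dec s y0) as [Hs0|Hs0].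
  - pose proof (Phi_le [c] s y0 Hs y0_in Hs0). pose proof (phi1_lt y0 y0_in y1_lt_y0).
    destruct c; simpl in *; rewrite ?phi0_y0 in *; lra.
  - pose proof (phi_lt_self_above c s Hs Hs0). lra.
Qed.

Lemma Phi_gt_below u s t : I s -> t < y1 -> t < s -> t < Phi u s.
Proof.
  revert s; induction u as [|c u IH]; intros s Hs Ht Hst; simpl; auto.
  apply IH; auto using phi_in. destruct (Rle_lt_dec y1 s) as [Hs1|Hs1].
  - pose proof (Phi_le [c] y1 s y1_in Hs Hs1). pose proof (phi0_gt y1 y1_in y1_lt_y0).
    destruct c; simpl in *; rewrite ?phi1_y1 in *; lra.
  - pose proof (phi_gt_self_below c s Hs Hs1). lra.
Qed.

Lemma Phi_fixpt_core u b : u <> [] -> I b -> Phi u b = b -> core b.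
Proof.
  destruct u as [|c u]; [easy|]. intros _ Hb Fb. simpl in Fb. split.
  - destruct (Rle_lt_dec y1 b) as [|Hb1]; auto.
    pose proof (Phi_gt_below u (phi c b) b (phi_in c b Hb) Hb1 (phi_gt_self_below c b Hb Hb1)).
    lra.
  - destruct (Rle_lt_dec b y0) as [|Hb0]; auto.
    pose proof (Phi_lt_above u (phi c b) b (phi_in c b Hb) Hb0 (phi_lt_self_above c b Hb Hb0)).
    lra.
Qed.

Lemma Phi_repeat_false_mono i j z : core z -> (i <= j)%nat ->
  Phi (repeat false i) z <= Phi (repeat false j) z.
Proof.
  intros Hz Hij. induction Hij as [|j _ IH]; [lra|].
  rewrite phiw_repeat_S_r. simpl.
  pose proof (Phi_core (repeat false j) z Hz) as Hc.
  pose proof (phi0_ge _ (core_in _ Hc) (proj2 Hc)). lra.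
Qed.

Lemma Phi_repeat_true_anti i j z : core z -> (i <= j)%nat ->
  Phi (repeat true j) z <= Phi (repeat true i) z.
Proof.
  intros Hz Hij. induction Hij as [|j _ IH]; [lra|].
  rewrite phiw_repeat_S_r. simpl.
  pose proof (Phi_core (repeat true j) z Hz) as Hc.
  pose proof (phi1_le _ (core_in _ Hc) (proj1 Hc)). lra.
Qed.

Lemma Phi_repeat_false_y0 k : Phi (repeat false k) y0 = y0.
Proof. induction k; simpl; auto. now rewrite phi0_y0. Qed.

Lemma Phi_repeat_true_y1 k : Phi (repeat true k) y1 = y1.
Proof. induction k; simpl; auto. now rewrite phi1_y1. Qed.

(* Intermediate value theorem for [Phi u - id] on [core], after clamping to [core]
   (outside [I] nothing is known about [Phi u]). *)
Lemma exists_Phi_fixpt u : exists z, core z /\ Phi u z = z.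
Proof.
  pose proof y1_lt_y0 as Hy.
  set (cl z := Rmax y1 (Rmin y0 z)).
  assert (Hcl : forall z, core (cl z)).
  { intros z. unfold cl, core, Rmax, Rmin. repeat destruct Rle_dec; lra. }
  assert (Hcl_id : forall z, core z -> cl z = z).
  { intros z []. unfold cl, Rmax, Rmin. repeat destruct Rle_dec; lra. }
  set (F z := Phi u (cl z) - cl z).
  assert (HF : continuity F).
  { apply (continuity_of_Lipschitz F 2); [lra|]. intros x y. unfold F.
    assert (Hclxy : Rabs (cl x - cl y) <= Rabs (x - y)).
    { unfold cl, Rmax, Rmin. repeat destruct Rle_dec;
        unfold Rabs; repeat destruct Rcase_abs; lra. }
    assert (HPxy : Rabs (Phi u (cl x) - Phi u (cl y)) <= Rabs (cl x - cl y)).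
    { pose proof (core_in _ (Hcl x)) as Hx. pose proof (core_in _ (Hcl y)) as Hy'.
      destruct (Rle_lt_dec (cl x) (cl y)) as [H|H].
      - pose proof (Phi_contract u _ _ Hx Hy' H). pose proof (Phi_le u _ _ Hx Hy' H).
        rewrite !Rabs_left1; lra.
      - pose proof (Phi_contract u _ _ Hy' Hx (Rlt_le _ _ H)).
        pose proof (Phi_le u _ _ Hy' Hx (Rlt_le _ _ H)). rewrite !Rabs_right; lra. }
    replace (Phi u (cl x) - cl x - (Phi u (cl y) - cl y))
      with ((Phi u (cl x) - Phi u (cl y)) + - (cl x - cl y)) by ring.
    eapply Rle_trans; [apply Rabs_triang|]. rewrite Rabs_Ropp. lra. }
  assert (HFy : F y1 * F y0 <= 0).
  { unfold F. rewrite !Hcl_id by (unfold core; lra).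
    pose proof (Phi_core u y1 ltac:(unfold core; lra)).
    pose proof (Phi_core u y0 ltac:(unfold core; lra)). unfold core in *.
    assert (0 <= Phi u y1 - y1) by lra. assert (Phi u y0 - y0 <= 0) by lra. nra. }
  destruct (IVT_cor F y1 y0 HF ltac:(lra) HFy) as [z [Hz Hz0]].
  exists z. unfold F in Hz0. rewrite Hcl_id in Hz0 by exact Hz. split; [exact Hz|lra].
Qed.

Lemma A2_renormalized (g : bool -> word) z0 z1 : (forall c, g c <> []) ->
  I z0 -> I z1 -> Phi (g false) z0 = z0 -> Phi (g true) z1 = z1 -> z1 < z0 ->
  A2 I (Phi (g false)) (Phi (g true)) z0 z1.
Proof.
  intros Hg H0 H1 F0 F1 Hlt. split; [|split; [|tauto]].
  - intros [] x Hx; now apply Phi_in.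
  - intros [] x y Hx Hy Hxy; split; simpl; auto using Phi_lt, Phi_contract_strict.
Qed.

(* The renormalized maps of [L_q] and [R_q] again satisfy A2: [phi_{g 1} <= phi_{g 0}]
   on [core] orders their fixed points, and they have no common fixed point. *)
Lemma exists_A2_renormalized (g : bool -> word) : (forall c, g c <> []) ->
  (forall z, core z -> Phi (g true) z <= Phi (g false) z) ->
  (forall z, core z -> Phi (g false) z = z -> Phi (g true) z = z -> False) ->
  exists z0 z1, A2 I (Phi (g false)) (Phi (g true)) z0 z1.
Proof.
  intros Hg Hle Hcommon.
  destruct (exists_Phi_fixpt (g false)) as [z0 [J0 F0]].
  destruct (exists_Phi_fixpt (g true)) as [z1 [J1 F1]].
  exists z0, z1. apply A2_renormalized; auto using core_in.
  destruct (Rle_lt_dec z0 z1) as [H|H]; auto. exfalso.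
  destruct H as [H| <-]; [|exact (Hcommon z0 J0 F0 F1)].
  pose proof (Phi_contract_strict (g true) z0 z1 (Hg true) (core_in _ J0) (core_in _ J1) H).
  pose proof (Hle z0 J0). lra.
Qed.

Lemma A2_Lp q : (1 <= q)%nat ->
  exists z0 z1, A2 I (Phi (Lp_letter q false)) (Phi (Lp_letter q true)) z0 z1.
Proof.
  intros Hq.
  assert (Hrel : forall z, Phi (Lp_letter q false) z = Phi (Lp_letter q true) (phi0 z))
    by reflexivity.
  apply exists_A2_renormalized.
  - intros []; destruct q; simpl; try lia; discriminate.
  - intros z Hz. pose proof (core_in z Hz). rewrite Hrel.
    apply Phi_le; auto. { now apply (phi_in false). } apply phi0_ge; auto. apply Hz.
  - intros z Hz F0 F1. pose proof (core_in z Hz) as Iz.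
    assert (Hz0 : phi0 z = z).
    { apply (Phi_inj (Lp_letter q true)); auto. { now apply (phi_in false). }
      rewrite <- Hrel. congruence. }
    assert (z = y0) as ->
      by (apply (Phi_fixpt_unique [false]); auto using y0_in, phi0_y0; discriminate).
    unfold Lp_letter in F1. rewrite phiw_app, Phi_repeat_false_y0 in F1.
    pose proof (phi1_lt y0 y0_in y1_lt_y0). simpl in F1. lra.
Qed.

Lemma Phi_Rp_letter_true q z : Phi (Rp_letter q true) z = phi1 (Phi (Rp_letter q false) z).
Proof. exact (phiw_repeat_S_r phi0 phi1 true q (phi0 z)). Qed.

Lemma A2_Rp q :
  exists z0 z1, A2 I (Phi (Rp_letter q false)) (Phi (Rp_letter q true)) z0 z1.
Proof.
  apply exists_A2_renormalized.
  - intros []; discriminate.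
  - intros z Hz. rewrite Phi_Rp_letter_true.
    pose proof (Phi_core (Rp_letter q false) z Hz) as Hc.
    apply phi1_le; [apply core_in|]; apply Hc.
  - intros z Hz F0 F1. pose proof (core_in z Hz) as Iz.
    rewrite Phi_Rp_letter_true, F0 in F1.
    assert (z = y1) as ->
      by (apply (Phi_fixpt_unique [true]); auto using y1_in, phi1_y1; discriminate).
    unfold Rp_letter in F0. simpl in F0. rewrite <- (Phi_repeat_true_y1 q) in F0 at 2.
    apply Phi_inj in F0; auto. { pose proof (phi0_gt y1 y1_in y1_lt_y0). lra. }
    now apply (phi_in false).
Qed.

Lemma cycle_gap_repeat_false k : cycle_gap I phi0 phi1 (repeat false k).
Proof.
  intros a b Ia Ib Fa Fb.
  assert (Jb : core b) by (eapply Phi_fixpt_core; [|exact Ib|exact Fb]; discriminate).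
  set (a' := Phi (repeat false k) (phi1 b)).
  assert (Ja' : core a') by (apply Phi_core, (phi_core true); exact Jb).
  assert (Hb : phi0 a' = b).
  { rewrite <- Fb. exact (eq_sym (phiw_repeat_S_r phi0 phi1 false k (phi1 b))). }
  assert (a = a') as ->.
  { apply (Phi_fixpt_unique (false :: true :: repeat false k)); auto using core_in.
    - discriminate.
    - simpl. now rewrite Hb. }
  assert (Hlt : a' < b).
  { rewrite <- Hb. apply phi0_gt; [now apply core_in|].
    unfold a'. rewrite <- (Phi_repeat_false_y0 k).
    apply Phi_lt; auto using y0_in. { now apply (phi_in true). }
    pose proof (Phi_le [true] b y0 Ib y0_in (proj2 Jb)).
    pose proof (phi1_lt y0 y0_in y1_lt_y0). simpl in *. lra. }
  split; [exact Hlt|split].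
  - exists (true :: repeat false k), []. split; [|reflexivity].
    simpl. now rewrite repeat_cons.
  - intros z c [[|d s] [t [Hu ->]]]; simpl in Hu; injection Hu as Hd Hu.
    + subst c. simpl. split; [discriminate|]. split; [intros _; lra|]. rewrite Hb.
      pose proof (phi1_le b Ib (proj1 Jb)). lra.
    + subst d. change (false :: repeat false k) with (repeat false (S k)) in Hu.
      pose proof (f_equal (@length bool) Hu) as Hlen.
      rewrite repeat_length, length_app in Hlen. simpl in Hlen.
      apply repeat_eq_elt in Hu as [<- [Hs _]]. rewrite <- Hs. simpl.
      pose proof (phi_core true b Jb) as J1b.
      pose proof (Phi_repeat_false_mono (length s) k (phi1 b) J1b ltac:(lia)) as Hle.
      pose proof (Phi_repeat_false_mono 0 (length s) (phi1 b) J1b ltac:(lia)) as Hge.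
      pose proof (phi0_ge a' (core_in _ Ja') (proj2 Ja')).
      simpl in Hge. fold a' in Hle.
      split; [intros _; lra|]. split; [discriminate|]. split; lra.
Qed.

Lemma cycle_gap_repeat_true k : cycle_gap I phi0 phi1 (repeat true k).
Proof.
  intros a b Ia Ib Fa Fb.
  assert (Jb : core b) by (eapply Phi_fixpt_core; [|exact Ib|exact Fb]; discriminate).
  assert (Ja : core a) by (eapply Phi_fixpt_core; [|exact Ia|exact Fa]; discriminate).
  assert (a = phi1 b) as ->.
  { apply (Phi_fixpt_unique (false :: true :: repeat true k)); auto.
    - discriminate.
    - now apply (phi_in true).
    - change (Phi (false :: true :: repeat true k) (phi1 b))
        with (Phi (repeat true (S k)) (phi0 (phi1 b))).
      rewrite phiw_repeat_S_r. simpl in Fb. simpl. now rewrite Fb. }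
  set (b' := phi0 (phi1 b)).
  assert (Jb' : core b') by (apply (phi_core false); exact Ja).
  assert (Hb : Phi (repeat true k) b' = b) by exact Fb.
  assert (Hbb' : b <= b').
  { rewrite <- Hb. exact (Phi_repeat_true_anti 0 k b' Jb' ltac:(lia)). }
  assert (Hlt : phi1 b < b).
  { apply phi1_lt; auto. rewrite <- Hb, <- (Phi_repeat_true_y1 k).
    apply Phi_lt; auto using y1_in, core_in.
    pose proof (phi0_gt y1 y1_in y1_lt_y0).
    pose proof (Phi_le [false] y1 (phi1 b) y1_in Ia (proj1 Ja)). simpl in *.
    unfold b'. lra. }
  split; [exact Hlt|split]; [now exists [true], (repeat true k)|].
  pose proof (phi0_ge (phi1 b) Ia (proj2 Ja)) as Hab'. fold b' in Hab'.
  intros z c [s [t [Hu ->]]].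
  destruct s as [|d [|d' s]]; simpl in Hu.
  - injection Hu as <- _. simpl. split; [discriminate|]. split; [intros _; lra|]. split; lra.
  - injection Hu as <- <- _. simpl. split; [intros _; lra|]. split; [discriminate|]. split; lra.
  - injection Hu as <- <- Hu.
    pose proof (f_equal (@length bool) Hu) as Hlen.
    rewrite repeat_length, length_app in Hlen. simpl in Hlen.
    apply repeat_eq_elt in Hu as [<- [Hs _]]. rewrite <- Hs. simpl. fold b'.
    assert (b <= Phi (repeat true (length s)) b').
    { rewrite <- Hb at 1. apply Phi_repeat_true_anti; auto. lia. }
    pose proof (Phi_repeat_true_anti 0 (length s) b' Jb' ltac:(lia)). simpl in *.
    split; [discriminate|]. split; [intros _; lra|]. split; lra.
Qed.

(* Bounds for the points [phi_r B] of the block [L_q(c')] that starts at the point [B] of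
   the renormalized cycle, obtained from the bounds on [B] and on its successor. *)
Lemma Lp_block_point_bounds q a' b' B c' r c r' : (1 <= q)%nat ->
  core a' -> core b' -> core B -> Lp_letter q c' = r ++ c :: r' ->
  (c' = false -> B <= a') ->
  Phi (Lp_letter q true) b' <= B ->
  Phi (Lp_letter q true) b' <= Phi (Lp_letter q c') B ->
  Phi (Lp_letter q c') B <= Phi (Lp_letter q false) a' ->
  (c = false -> Phi r B <= Phi (repeat false q) a') /\
  (c = true -> Phi (repeat false q) b' <= Phi r B) /\
  phi1 (Phi (repeat false q) b') <= Phi r B /\ Phi r B <= phi0 (Phi (repeat false q) a').
Proof.
  intros Hq Ja' Jb' JB Hg HB0 Hlo Hslo Hshi.
  set (m := if c' then q else S q).
  assert (Hm : forall z, Phi (Lp_letter q c') z = phi1 (Phi (repeat false m) z))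
    by (intros z; unfold m; destruct c'; apply phiw_app).
  set (A := Phi (repeat false q) a').
  assert (JA : core A) by now apply Phi_core.
  assert (HB_mono : forall i j, (i <= j)%nat -> Phi (repeat false i) B <= Phi (repeat false j) B)
    by (intros; now apply Phi_repeat_false_mono).
  assert (Hmono0 := HB_mono 0%nat). simpl in Hmono0.
  assert (HBm_in : I (Phi (repeat false m) B)) by now apply Phi_in, core_in.
  rewrite Hm in Hslo, Hshi. unfold Lp_letter in Hlo, Hslo, Hshi.
  rewrite !phiw_app, phiw_repeat_S_r in *. fold A in Hshi. simpl in Hlo, Hshi.
  apply (Phi_le_inv [true]) in Hslo; [|now apply Phi_in, core_in|exact HBm_in].
  apply (Phi_le_inv [true]) in Hshi; [|exact HBm_in|now apply (phi_in false), core_in].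
  assert (HAA : A <= phi0 A) by (apply phi0_ge; [apply core_in|]; apply JA).
  replace (Lp_letter q c') with (repeat false m ++ [true]) in Hg by now destruct c'.
  destruct (repeat_snoc_eq_app_cons false true m r c r' Hg) as [[-> ->]|[i [Hi [-> ->]]]].
  - pose proof (Hmono0 m ltac:(lia)).
    split; [discriminate|]. split; [intros _; exact Hslo|]. split; lra.
  - assert (Phi (repeat false i) B <= A).
    { destruct c'; unfold m in Hi.
      - unfold m in Hshi. destruct q as [|q0]; [lia|].
        rewrite phiw_repeat_S_r in Hshi.
        apply (Phi_le_inv [false]) in Hshi; [|now apply Phi_in, core_in|now apply core_in].
        pose proof (HB_mono i q0 ltac:(lia)). simpl in Hshi. lra.
      - pose proof (HB_mono i q ltac:(lia)).
        pose proof (Phi_le (repeat false q) B a' (core_in _ JB) (core_in _ Ja') (HB0 eq_refl))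
          as HBA.
        fold A in HBA. lra. }
    pose proof (Hmono0 i ltac:(lia)).
    split; [intros _; lra|]. split; [discriminate|]. split; lra.
Qed.

Lemma Rp_block_point_bounds q a' b' B c' r c r' :
  core a' -> core b' -> core B -> Rp_letter q c' = r ++ c :: r' ->
  (c' = true -> b' <= B) ->
  Phi (Rp_letter q true) b' <= B -> B <= Phi (Rp_letter q false) a' ->
  Phi (Rp_letter q true) b' <= Phi (Rp_letter q c') B ->
  (c = false -> Phi r B <= Phi (Rp_letter q false) a') /\
  (c = true -> Phi (Rp_letter q false) b' <= Phi r B) /\
  phi1 (Phi (Rp_letter q false) b') <= Phi r B /\
  Phi r B <= phi0 (Phi (Rp_letter q false) a').
Proof.
  intros Ja' Jb' JB Hg HB1 Hlo Hhi Hslo.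
  set (a := Phi (Rp_letter q false) a') in *. set (b := Phi (Rp_letter q false) b') in *.
  assert (Ja : core a) by now apply Phi_core.
  assert (Jb : core b) by now apply Phi_core.
  rewrite Phi_Rp_letter_true in Hlo, Hslo. fold b in Hlo, Hslo.
  pose proof (phi1_le b (core_in _ Jb) (proj1 Jb)).
  pose proof (phi0_ge a (core_in _ Ja) (proj2 Ja)).
  pose proof (Phi_le [false] B a (core_in _ JB) (core_in _ Ja) Hhi) as HBa. simpl in HBa.
  set (m := if c' then S q else q) in *.
  replace (Rp_letter q c') with (false :: repeat true m) in Hg, Hslo by now destruct c'.
  destruct (cons_repeat_eq_app_cons false true m r c r' Hg) as [[-> ->]|[i [Hi [-> ->]]]].
  - simpl. split; [intros _; lra|]. split; [discriminate|]. split; lra.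
  - pose proof (phi_core false B JB) as J0B.
    change (Phi (false :: repeat true i) B) with (Phi (repeat true i) (phi0 B)).
    assert (b <= Phi (repeat true i) (phi0 B)).
    { destruct c'; unfold m in Hi, Hslo.
      - pose proof (Phi_repeat_true_anti i q (phi0 B) J0B ltac:(lia)).
        pose proof (Phi_le (Rp_letter q false) b' B (core_in _ Jb') (core_in _ JB) (HB1 eq_refl))
          as HbB.
        fold b in HbB. simpl in HbB. lra.
      - destruct q as [|q0]; [lia|].
        change (Phi (false :: repeat true (S q0)) B)
          with (Phi (repeat true (S q0)) (phi0 B)) in Hslo.
        rewrite phiw_repeat_S_r in Hslo.
        apply (Phi_le_inv [true]) in Hslo; [|now apply core_in|now apply core_in, Phi_core].
        pose proof (Phi_repeat_true_anti i q0 (phi0 B) J0B ltac:(lia)). simpl in Hslo. lra. }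
    pose proof (Phi_repeat_true_anti 0 i (phi0 B) J0B ltac:(lia)). simpl in *.
    split; [discriminate|]. split; [intros _; lra|]. split; lra.
Qed.

Lemma cycle_point_renormalized_core (g : bool -> word) x p B c : core p ->
  cycle_point (Phi (g false)) (Phi (g true)) x p B c -> core B.
Proof. intros Hp [s [t [_ ->]]]. rewrite phiw_flat_map. now apply Phi_core. Qed.

Lemma renormalized_fixpt (g : bool -> word) v u x b : v ++ u = flat_map g x ->
  u <> [] -> I b -> Phi (u ++ v) b = b ->
  exists b', core b' /\ Phi v b' = b /\ phiw (Phi (g false)) (Phi (g true)) x b' = b'.
Proof.
  intros Hvu Hu Ib Fb. exists (Phi u b).
  assert (Hb : Phi v (Phi u b) = b) by now rewrite <- phiw_app.
  assert (Fb' : Phi (v ++ u) (Phi u b) = Phi u b) by now rewrite phiw_app, Hb.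
  split; [|split; [exact Hb|now rewrite phiw_flat_map, <- Hvu]].
  apply (Phi_fixpt_core (v ++ u)); [|now apply Phi_in|exact Fb'].
  intros H. apply app_eq_nil in H. tauto.
Qed.

(* With [v = 0^q] (resp. [v = 0 1^q] for [R_q]), [10w = u ++ v] and [01w = ua ++ v] are
   rotations of the images of [10w'] and [01w'], so [phi_v] carries the fixed points and
   cycles of the renormalized maps to those of [phi]. *)
Lemma cycle_gap_Lp q w' : (1 <= q)%nat ->
  (forall p0 p1 z0 z1, A2 I p0 p1 z0 z1 -> cycle_gap I p0 p1 w') ->
  cycle_gap I phi0 phi1 (repeat false q ++ true :: Lp q w' ++ repeat false q).
Proof.
  intros Hq IH a b Ia Ib Fa Fb.
  set (g := Lp_letter q). set (v := repeat false q) in *.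
  set (u := true :: false :: v ++ true :: Lp q w').
  set (ua := false :: true :: v ++ true :: Lp q w').
  destruct (A2_Lp q Hq) as [z0 [z1 HA']].
  assert (Eu : true :: false :: v ++ true :: Lp q w' ++ v = u ++ v)
    by (unfold u; simpl; now rewrite <- !app_assoc).
  assert (Eua : false :: true :: v ++ true :: Lp q w' ++ v = ua ++ v)
    by (unfold ua; simpl; now rewrite <- !app_assoc).
  assert (Hvu : v ++ u = flat_map g (true :: false :: w')).
  { unfold u, v, g. simpl. now rewrite <- !app_assoc. }
  assert (Hvua : v ++ ua = flat_map g (false :: true :: w')).
  { unfold ua, v, g. simpl. rewrite <- !app_assoc. simpl. now rewrite repeat_app_cons. }
  rewrite Eu in Fb |- *. rewrite Eua in Fa.
  destruct (renormalized_fixpt g v u _ b Hvu ltac:(discriminate) Ib Fb) as [b' [Jb' [<- Fb']]].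
  destruct (renormalized_fixpt g v ua _ a Hvua ltac:(discriminate) Ia Fa) as [a' [Ja' [<- Fa']]].
  destruct (IH _ _ _ _ HA' a' b' (core_in _ Ja') (core_in _ Jb') Fa' Fb')
    as [Hlt [HOa Hgap]].
  split; [|split].
  - apply Phi_lt; auto using core_in.
  - apply (cycle_point_unrenormalize _ _ g _ _ _ _ a' false v false [true] Hvu Fb' HOa).
    unfold g, Lp_letter, v. simpl. now rewrite repeat_app_cons.
  - intros z c Hz.
    destruct (cycle_point_renormalize _ _ g _ _ _ _ _ _ Hvu Fb' Hz)
      as [B [c' [r [r' [HB [Hg ->]]]]]].
    pose proof (cycle_point_renormalized_core g _ _ _ _ Jb' HB) as JB.
    destruct (Hgap B c' HB) as [HB0 [_ [Hlo _]]].
    destruct (cycle_point_succ _ _ _ _ _ _ Fb' HB) as [c2 Hs].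
    destruct (Hgap _ _ Hs) as [_ [_ [Hslo Hshi]]].
    apply (Lp_block_point_bounds q a' b' B c' r c r'); auto; destruct c'; auto.
Qed.

Lemma cycle_gap_Rp q w' :
  (forall p0 p1 z0 z1, A2 I p0 p1 z0 z1 -> cycle_gap I p0 p1 w') ->
  cycle_gap I phi0 phi1 (repeat true q ++ Rp q w' ++ false :: repeat true q).
Proof.
  intros IH a b Ia Ib Fa Fb.
  set (g := Rp_letter q). set (v := false :: repeat true q) in *.
  set (u := true :: false :: repeat true q ++ Rp q w').
  set (ua := false :: true :: repeat true q ++ Rp q w').
  destruct (A2_Rp q) as [z0 [z1 HA']].
  assert (Eu : true :: false :: repeat true q ++ Rp q w' ++ v = u ++ v)
    by (unfold u; simpl; now rewrite <- !app_assoc).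
  assert (Eua : false :: true :: repeat true q ++ Rp q w' ++ v = ua ++ v)
    by (unfold ua; simpl; now rewrite <- !app_assoc).
  assert (Hvu : v ++ u = flat_map g (true :: false :: w')).
  { unfold u, v, g. simpl. now rewrite repeat_app_cons. }
  assert (Hvua : v ++ ua = flat_map g (false :: true :: w')).
  { unfold ua, v, g. now simpl. }
  rewrite Eu in Fb |- *. rewrite Eua in Fa.
  destruct (renormalized_fixpt g v u _ b Hvu ltac:(discriminate) Ib Fb) as [b' [Jb' [<- Fb']]].
  destruct (renormalized_fixpt g v ua _ a Hvua ltac:(discriminate) Ia Fa) as [a' [Ja' [<- Fa']]].
  destruct (IH _ _ _ _ HA' a' b' (core_in _ Ja') (core_in _ Jb') Fa' Fb')
    as [Hlt [HOa Hgap]].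
  split; [|split].
  - apply Phi_lt; auto using core_in.
  - destruct (cycle_point_succ _ _ _ _ _ _ Fb' HOa) as [c2 Hs].
    apply (cycle_point_unrenormalize _ _ g _ _ _ _ _ c2 [] false
             (repeat true (if c2 then S q else q)) Hvu Fb' Hs).
    now destruct c2.
  - intros z c Hz.
    destruct (cycle_point_renormalize _ _ g _ _ _ _ _ _ Hvu Fb' Hz)
      as [B [c' [r [r' [HB [Hg ->]]]]]].
    pose proof (cycle_point_renormalized_core g _ _ _ _ Jb' HB) as JB.
    destruct (Hgap B c' HB) as [_ [HB1 [Hlo Hhi]]].
    destruct (cycle_point_succ _ _ _ _ _ _ Fb' HB) as [c2 Hs].
    destruct (Hgap _ _ Hs) as [_ [_ [Hslo _]]].
    apply (Rp_block_point_bounds q a' b' B c' r c r'); auto; destruct c'; auto.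
Qed.

(* For [z <= x < a], [Phi u z - z >= Phi u x - x > 0]: the iterates gain a fixed amount
   at each step, so they cannot all stay below [x]. *)
Lemma Phi_iterates_not_below u a x (zs : nat -> R) : u <> [] -> I a -> I x ->
  Phi u a = a -> x < a -> (forall j, I (zs j) /\ zs j < x) ->
  (forall j, zs (S j) = Phi u (zs j)) -> False.
Proof.
  intros Hu Ia Ix Fa Hxa Hzs Hstep.
  set (delta := Phi u x - x).
  assert (Hdelta : 0 < delta).
  { pose proof (Phi_contract_strict u x a Hu Ix Ia Hxa). unfold delta. lra. }
  assert (Hgrow : forall j, zs 0%nat + INR j * delta <= zs j).
  { induction j as [|j IH]; [simpl; lra|].
    destruct (Hzs j) as [Ij Hj]. rewrite Hstep, S_INR.
    pose proof (Phi_contract u (zs j) x Ij Ix (Rlt_le _ _ Hj)). unfold delta in *. lra. }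
  destruct (INR_archimed delta (x - zs 0%nat) Hdelta) as [j Hj].
  specialize (Hgrow j). specialize (Hzs j). lra.
Qed.

Lemma orbit_in x k : I x -> I (orbit phi0 phi1 x k).
Proof.
  intros Hx. induction k as [|k IH]; simpl; [now apply (phi_in true)|].
  destruct Rle_dec; [apply (phi_in true)|apply (phi_in false)]; exact IH.
Qed.

Lemma orbit_core x k : core x -> core (orbit phi0 phi1 x k).
Proof.
  intros Hx. induction k as [|k IH]; simpl; [now apply (phi_core true)|].
  destruct Rle_dec; [apply (phi_core true)|apply (phi_core false)]; exact IH.
Qed.

Lemma threshold_word_false x : I x -> y0 <= x -> threshold_word phi0 phi1 x [false].
Proof.
  intros Hx Hxy. split; [discriminate|split].
  - assert (Horb : forall k, orbit phi0 phi1 x k < x).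
    { assert (Hp0 : phi0 x <= x).
      { destruct Hxy as [Hlt| <-]; [|rewrite phi0_y0; lra].
        pose proof (phi_contract false y0 x y0_in Hx Hlt). simpl in *. rewrite phi0_y0 in *. lra. }
      induction k as [|k IH]; simpl.
      - apply phi1_lt; auto. pose proof y1_lt_y0. lra.
      - destruct Rle_dec; [lra|].
        pose proof (phi_lt false _ _ (orbit_in x k Hx) Hx IH). simpl in *. lra. }
    intros k. simpl. destruct Rle_dec as [H|_]; [pose proof (Horb k); lra|].
    now destruct (k mod 1)%nat as [|[]].
  - intros [|c pi'] Hne _; [easy|simpl; lia].
Qed.

Lemma threshold_word_true x : I x -> x <= y1 -> threshold_word phi0 phi1 x [true].
Proof.
  intros Hx Hxy. split; [discriminate|split].
  - assert (Horb : forall k, x <= orbit phi0 phi1 x k).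
    { assert (Hp1 : x <= phi1 x).
      { destruct Hxy as [Hlt| ->]; [|rewrite phi1_y1; lra].
        pose proof (phi_contract true x y1 Hx y1_in Hlt). simpl in *. rewrite phi1_y1 in *. lra. }
      induction k as [|k IH]; simpl; [exact Hp1|].
      destruct Rle_dec as [H|]; [|lra].
      pose proof (Phi_le [true] _ _ Hx (orbit_in x k Hx) H). simpl in *. lra. }
    intros k. simpl. destruct Rle_dec as [_|H]; [reflexivity|pose proof (Horb k); lra].
  - intros [|c pi'] Hne _; [easy|simpl; lia].
Qed.

Lemma core_of_threshold_word x pi : I x -> (2 <= length pi)%nat ->
  threshold_word phi0 phi1 x pi -> core x.
Proof.
  intros Ix Hlen [_ [_ Hmin]]. split.
  - destruct (Rle_lt_dec y1 x) as [|H]; [assumption|].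
    destruct (threshold_word_true x Ix (Rlt_le _ _ H)) as [_ [Hf1 _]].
    specialize (Hmin [true] ltac:(discriminate) Hf1). simpl in Hmin. lia.
  - destruct (Rle_lt_dec x y0) as [|H]; [assumption|].
    destruct (threshold_word_false x Ix (Rlt_le _ _ H)) as [_ [Hf0 _]].
    specialize (Hmin [false] ltac:(discriminate) Hf0). simpl in Hmin. lia.
Qed.

Lemma follows_letter_bounds x pi k : core x -> follows phi0 phi1 x pi ->
  (letter pi k = true -> x <= orbit phi0 phi1 x k) /\
  (letter pi k = false -> orbit phi0 phi1 x k < x).
Proof.
  intros Hx Hf. specialize (Hf k). fold (letter pi k) in Hf. simpl in Hf.
  pose proof (phi0_neq_phi1 _ (orbit_core x k Hx)).
  destruct Rle_dec, (letter pi k); simpl in Hf; split; intros; congruence || lra.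
Qed.

Lemma follows_letter_unique x pi pi' k : core x ->
  follows phi0 phi1 x pi -> follows phi0 phi1 x pi' -> letter pi k = letter pi' k.
Proof.
  intros Hx Hf Hf'. specialize (Hf k). specialize (Hf' k).
  fold (letter pi k) in Hf. fold (letter pi' k) in Hf'. rewrite Hf in Hf'.
  pose proof (phi0_neq_phi1 _ (orbit_core x k Hx)).
  destruct (letter pi k), (letter pi' k); simpl in Hf'; congruence.
Qed.

Section ThresholdWord.
Variables (w : word) (a b : R).
Hypotheses (Ia : I a) (Ib : I b).
Hypothesis Fa : Phi (false :: true :: w) a = a.
Hypothesis Fb : Phi (true :: false :: w) b = b.
Hypothesis Hgap : cycle_gap I phi0 phi1 w.

Notation pi := (false :: w ++ [true]).
Notation orb := (orbit phi0 phi1).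
Notation cyc := (traj phi0 phi1 (letter pi) (phi1 b)).

Lemma Phi_pi_phi1_b : Phi pi (phi1 b) = phi1 b.
Proof.
  change pi with ((false :: w) ++ [true]). rewrite phiw_app.
  change (Phi (false :: w) (phi1 b)) with (Phi (true :: false :: w) b). now rewrite Fb.
Qed.

Lemma cycle_point_pi_rot z c :
  cycle_point phi0 phi1 pi (phi1 b) z c -> cycle_point phi0 phi1 (true :: false :: w) b z c.
Proof.
  intros H. change pi with ((false :: w) ++ [true]) in H.
  apply cycle_point_rot in H; [|exact Phi_pi_phi1_b].
  change (Phi (false :: w) (phi1 b)) with (Phi (true :: false :: w) b) in H.
  rewrite Fb in H. exact H.
Qed.

Lemma cyc_cycle_point k : cycle_point phi0 phi1 (true :: false :: w) b (cyc k) (letter pi k).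
Proof. apply cycle_point_pi_rot, cycle_point_traj_letter; [discriminate|exact Phi_pi_phi1_b]. Qed.

Lemma core_a : core a.
Proof. eapply Phi_fixpt_core; [|exact Ia|exact Fa]; discriminate. Qed.

Lemma core_b : core b.
Proof. eapply Phi_fixpt_core; [|exact Ib|exact Fb]; discriminate. Qed.

(* For [a <= x <= b] the threshold orbit of [x] shadows the cycle from below, never
   further away than at the start ([phi1 x] against [phi1 b]). *)
Definition shadows x k :=
  orb x k <= cyc k /\ cyc k - orb x k <= b - x /\ (x < b -> orb x k < cyc k).

Lemma orbit_step_of_shadows x k : a <= x <= b -> shadows x k ->
  orb x (S k) = phik phi0 phi1 (letter pi k) (orb x k).
Proof.
  intros [Hax Hxb] [H1 [H2 H3]].
  destruct (Hgap a b Ia Ib Fa Fb) as [Hab [_ Hbd]].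
  destruct (Hbd _ _ (cyc_cycle_point k)) as [B0 [B1 _]]. simpl.
  destruct (letter pi k); destruct Rle_dec as [H|H]; auto; exfalso.
  - specialize (B1 eq_refl). lra.
  - specialize (B0 eq_refl). destruct (Rle_lt_dec b x) as [|Hxb']; [lra|].
    specialize (H3 Hxb'). lra.
Qed.

Lemma shadows_all x : I x -> a <= x <= b -> forall k, shadows x k.
Proof.
  intros Ix Hx. pose proof core_b as Jb.
  assert (Icyc : forall k, I (cyc k)).
  { intros k. destruct (cyc_cycle_point k) as [s [t [_ ->]]]. now apply Phi_in. }
  induction k as [|k IH].
  - simpl. pose proof (Phi_contract [true] x b Ix Ib (proj2 Hx)).
    repeat split; simpl in *; try lra.
    + apply (Phi_le [true]); auto. apply Hx.
    + intros. apply (Phi_lt [true]); auto.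
  - pose proof (orbit_in x k Ix) as Io. destruct IH as [H1 [H2 H3]].
    unfold shadows. rewrite orbit_step_of_shadows by (auto; split; auto).
    change (cyc (S k)) with (phik phi0 phi1 (letter pi k) (cyc k)).
    pose proof (Phi_contract [letter pi k] _ _ Io (Icyc k) H1). simpl in *.
    repeat split; try lra.
    + apply (Phi_le [letter pi k]); auto.
    + intros. apply (Phi_lt [letter pi k]); auto.
Qed.

Lemma follows_of_between x : I x -> a <= x <= b -> follows phi0 phi1 x pi.
Proof. intros Ix Hx k. apply orbit_step_of_shadows; auto. now apply shadows_all. Qed.

Lemma le_b_of_follows x : I x -> core x -> follows phi0 phi1 x pi -> x <= b.
Proof.
  intros Ix Jx Hf. set (k := S (length w)).
  assert (Hk : letter pi k = true).
  { rewrite letter_lt by (simpl; rewrite length_app; simpl; lia). unfold k. simpl.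
    rewrite app_nth2 by lia. now rewrite Nat.sub_diag. }
  pose proof (proj1 (follows_letter_bounds x pi k Jx Hf) Hk) as H.
  rewrite (follows_orbit_traj _ _ _ _ _ Hf), traj_letter_firstn in H
    by (simpl; rewrite length_app; simpl; lia).
  replace (firstn k pi) with (false :: w) in H.
  - apply (le_Phi_fixpt (true :: false :: w)); auto. discriminate.
  - unfold k. simpl. f_equal. rewrite <- (Nat.add_0_r (length w)), firstn_app_2.
    simpl. now rewrite app_nil_r.
Qed.

Lemma ge_a_of_follows x : I x -> core x -> follows phi0 phi1 x pi -> a <= x.
Proof.
  intros Ix Jx Hf. destruct (Rle_lt_dec a x) as [|Hxa]; [assumption|exfalso].
  destruct (Hgap a b Ia Ib Fa Fb) as [_ [HOa _]].
  apply (cycle_point_rot _ _ [true] (false :: w)) in HOa; [|exact Fb].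
  destruct HOa as [s [t [Hpi Ha]]]. simpl in Hpi.
  set (n := length pi). set (r := length s).
  assert (Hr : (r < n)%nat) by (unfold n, r; rewrite Hpi, length_app; simpl; lia).
  assert (Hlet : letter pi r = false).
  { rewrite letter_lt by exact Hr. rewrite Hpi. apply nth_middle. }
  assert (Hcyc : cyc r = a).
  { rewrite traj_letter_firstn by lia. rewrite Hpi.
    unfold r. rewrite <- (Nat.add_0_r (length s)), firstn_app_2. simpl.
    now rewrite app_nil_r, Ha. }
  set (blk := map (fun i => letter pi (r + i)) (seq 0 n)).
  assert (Hblk : forall z j, traj phi0 phi1 (letter pi) z (r + j * n + n) =
                             Phi blk (traj phi0 phi1 (letter pi) z (r + j * n))).
  { intros z j. rewrite traj_add. f_equal. apply map_ext. intros i.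
    replace (r + j * n + i)%nat with (r + i + j * n)%nat by lia.
    apply letter_add_mul. }
  apply (Phi_iterates_not_below blk a x (fun j => orb x (r + j * n)%nat)); auto.
  - unfold blk, n. simpl. discriminate.
  - rewrite <- Hcyc. pose proof (Hblk (phi1 b) 0%nat) as H0.
    rewrite Nat.mul_0_l, Nat.add_0_r in H0. rewrite <- H0.
    apply traj_letter_period, Phi_pi_phi1_b.
  - intros j. split; [now apply orbit_in|].
    apply (follows_letter_bounds x pi _ Jx Hf). now rewrite letter_add_mul.
  - intros j. rewrite !(follows_orbit_traj _ _ _ _ _ Hf).
    replace (r + S j * n)%nat with (r + j * n + n)%nat by lia. apply Hblk.
Qed.

Lemma threshold_word_iff x :
  (forall m, (0 < m < length pi)%nat -> ~ is_period pi m) ->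
  I x -> (threshold_word phi0 phi1 x pi <-> a <= x <= b).
Proof.
  intros Hprim Ix. split.
  - intros Hth.
    assert (Jx : core x).
    { apply (core_of_threshold_word x pi Ix); [|exact Hth].
      simpl. rewrite length_app. simpl. lia. }
    destruct Hth as [_ [Hf _]].
    split; [now apply ge_a_of_follows|now apply le_b_of_follows].
  - intros Hx. pose proof core_a as Ja. pose proof core_b as Jb.
    assert (Jx : core x) by (unfold core in *; lra).
    split; [discriminate|split; [now apply follows_of_between|]].
    intros pi' Hpi' Hf'. destruct (Nat.lt_ge_cases (length pi') (length pi)) as [Hlt|]; auto.
    exfalso. apply (Hprim (length pi')); [destruct pi'; [easy|simpl in *; lia]|].
    intros k. pose proof (follows_of_between x Ix Hx) as Hf.
    rewrite !(follows_letter_unique x pi pi') by assumption.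
    rewrite <- (Nat.mul_1_l (length pi')). apply letter_add_mul.
Qed.
End ThresholdWord.
End Contraction.

(** * Valid words *)

Lemma Lp_cons_snoc p w : Lp p (false :: w ++ [true]) =
  false :: (repeat false p ++ true :: Lp p w ++ repeat false p) ++ [true].
Proof.
  unfold Lp. simpl. rewrite flat_map_app. simpl.
  rewrite app_nil_r, <- !app_assoc. simpl. now rewrite <- !app_assoc.
Qed.

Lemma Rp_cons_snoc p w : Rp p (false :: w ++ [true]) =
  false :: (repeat true p ++ Rp p w ++ false :: repeat true p) ++ [true].
Proof.
  unfold Rp. simpl. rewrite flat_map_app. simpl.
  rewrite app_nil_r, <- !app_assoc. simpl. now rewrite repeat_cons.
Qed.

Lemma valid_cycle_gap I (HI : is_interval I) x : valid x ->
  x = [false] \/ x = [true] \/ exists w, x = false :: w ++ [true] /\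
    forall p0 p1 z0 z1, A2 I p0 p1 z0 z1 -> cycle_gap I p0 p1 w.
Proof.
  induction 1 as [| |p x Hp _ IH|p x Hp _ IH]; [now left|now right; left| |];
    right; right; destruct IH as [->|[->|[w [-> Hw]]]].
  - exists (repeat false p). split; [unfold Lp; simpl; now rewrite app_nil_r|].
    intros. now apply (cycle_gap_repeat_false I p0 p1 z0 z1).
  - destruct p as [|k]; [lia|]. exists (repeat false k).
    split; [unfold Lp; simpl; now rewrite app_nil_r|].
    intros. now apply (cycle_gap_repeat_false I p0 p1 z0 z1).
  - eexists. split; [apply Lp_cons_snoc|].
    intros. now apply (cycle_gap_Lp I p0 p1 z0 z1).
  - destruct p as [|k]; [lia|]. exists (repeat true k).
    split; [unfold Rp; simpl; now rewrite app_nil_r, repeat_cons|].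
    intros. now apply (cycle_gap_repeat_true I p0 p1 z0 z1).
  - exists (repeat true p). split; [unfold Rp; simpl; now rewrite app_nil_r, repeat_cons|].
    intros. now apply (cycle_gap_repeat_true I p0 p1 z0 z1).
  - eexists. split; [apply Rp_cons_snoc|].
    intros. now apply (cycle_gap_Rp I p0 p1 z0 z1).
Qed.

Notation count c x := (count_occ bool_dec x c).

Lemma count_repeat c c' n : count c (repeat c' n) = if bool_dec c' c then n else 0%nat.
Proof.
  induction n as [|n IH]; simpl; [now destruct bool_dec|]. now destruct bool_dec; rewrite IH.
Qed.

Lemma count_concat_repeat c u q : count c (concat (repeat u q)) = (q * count c u)%nat.
Proof. induction q as [|q IH]; simpl; [reflexivity|]. rewrite count_occ_app, IH. lia. Qed.

Lemma count_Lp p x :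
  count false (Lp p x) = (S p * count false x + p * count true x)%nat /\
  count true (Lp p x) = (count false x + count true x)%nat.
Proof.
  induction x as [|c x [IH0 IH1]]; [simpl; lia|].
  change (Lp p (c :: x)) with (Lp_letter p c ++ Lp p x).
  rewrite !count_occ_app, IH0, IH1.
  destruct c; unfold Lp_letter; rewrite !count_occ_app, !count_repeat; simpl; lia.
Qed.

Lemma count_Rp p x :
  count false (Rp p x) = (count false x + count true x)%nat /\
  count true (Rp p x) = (p * count false x + S p * count true x)%nat.
Proof.
  induction x as [|c x [IH0 IH1]]; [simpl; lia|].
  change (Rp p (c :: x)) with (Rp_letter p c ++ Rp p x).
  rewrite !count_occ_app, IH0, IH1.
  destruct c; unfold Rp_letter; simpl; rewrite !count_repeat; simpl; lia.
Qed.

Lemma valid_counts_coprime x : valid x -> Nat.gcd (count false x) (count true x) = 1%nat.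
Proof.
  induction 1 as [| |p w _ _ IH|p w _ _ IH]; [reflexivity|reflexivity| |].
  - destruct (count_Lp p w) as [-> ->].
    replace (S p * count false w + p * count true w)%nat
      with (count false w + p * (count false w + count true w))%nat by lia.
    rewrite Nat.gcd_comm, Nat.gcd_add_mult_diag_r, Nat.gcd_comm, Nat.add_comm.
    now rewrite Nat.gcd_add_diag_r.
  - destruct (count_Rp p w) as [-> ->].
    replace (p * count false w + S p * count true w)%nat
      with (count true w + p * (count false w + count true w))%nat by lia.
    now rewrite Nat.gcd_add_mult_diag_r, Nat.gcd_comm, Nat.gcd_add_diag_r, Nat.gcd_comm.
Qed.

(* Euclid's algorithm on periods: with [m] and [length pi], [length pi mod m] is a period. *)
Lemma is_period_divisor pi m : (0 < m)%nat -> is_period pi m ->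
  exists e, (0 < e <= m)%nat /\ is_period pi e /\ Nat.divide e (length pi).
Proof.
  induction m as [m IH] using lt_wf_ind. intros Hm Hper.
  set (n := length pi).
  destruct (Nat.eq_dec (n mod m) 0) as [H0|H0].
  - exists m. split; [lia|]. split; [exact Hper|]. now apply Nat.Lcm0.mod_divide.
  - assert (Hr : (n mod m < m)%nat) by (apply Nat.mod_upper_bound; lia).
    destruct (IH (n mod m) Hr ltac:(lia)) as [e [He [Hpe Hdiv]]].
    + intros k. rewrite <- (is_period_mul pi m (n / m) (k + n mod m)) by exact Hper.
      replace (k + n mod m + n / m * m)%nat with (k + 1 * n)%nat
        by (pose proof (Nat.div_mod_eq n m); lia).
      apply letter_add_mul.
    + exists e. split; [lia|]. now split.
Qed.

Lemma nth_concat_repeat {T} (u : list T) q i d : (i < q * length u)%nat ->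
  nth i (concat (repeat u q)) d = nth (i mod length u) u d.
Proof.
  revert i. induction q as [|q IH]; intros i Hi; simpl in *; [lia|].
  destruct (Nat.lt_ge_cases i (length u)).
  - rewrite app_nth1, Nat.mod_small by lia. reflexivity.
  - rewrite app_nth2, IH by lia. f_equal.
    rewrite <- (Nat.Div0.mod_add (i - length u) 1). f_equal. lia.
Qed.

Lemma length_concat_repeat {T} (u : list T) q : length (concat (repeat u q)) = (q * length u)%nat.
Proof. induction q as [|q IH]; simpl; [reflexivity|]. rewrite length_app, IH. lia. Qed.

Lemma is_period_concat_repeat pi e q : (0 < q)%nat -> length pi = (q * e)%nat ->
  is_period pi e -> pi = concat (repeat (firstn e pi) q).
Proof.
  intros Hq Hlen Hper.
  assert (Hu : length (firstn e pi) = e) by (rewrite length_firstn; nia).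
  apply nth_ext with (d := false) (d' := false).
  { now rewrite length_concat_repeat, Hu. }
  intros i Hi. rewrite nth_concat_repeat by (rewrite Hu; lia). rewrite Hu, nth_firstn.
  assert (He : e <> 0%nat) by (intros ->; lia).
  pose proof (Nat.mod_upper_bound i e He).
  destruct (Nat.ltb_spec (i mod e) e); [|lia].
  rewrite <- !letter_lt by nia. rewrite (Nat.div_mod_eq i e) at 1.
  rewrite Nat.add_comm, Nat.mul_comm. now apply is_period_mul.
Qed.

Lemma valid_aperiodic pi : valid pi ->
  forall m, (0 < m < length pi)%nat -> ~ is_period pi m.
Proof.
  intros Hv m Hm Hper.
  destruct (is_period_divisor pi m ltac:(lia) Hper) as [e [He [Hpe [q Hq]]]].
  assert (Hq2 : (2 <= q)%nat) by nia.
  pose proof (is_period_concat_repeat pi e q ltac:(lia) Hq Hpe) as Hpi.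
  pose proof (valid_counts_coprime pi Hv) as Hg.
  rewrite Hpi, !count_concat_repeat in Hg.
  assert (Hdiv : Nat.divide q 1).
  { rewrite <- Hg. apply Nat.gcd_greatest; [exists (count false (firstn e pi))|
      exists (count true (firstn e pi))]; lia. }
  apply Nat.divide_pos_le in Hdiv; lia.
Qed.

Theorem proposition2 (I : R -> Prop) (phi0 phi1 : R -> R) (y0 y1 : R)
  (HI : is_interval I) (HA2 : A2 I phi0 phi1 y0 y1) :
  (forall (w : word) (a b x : R),
      valid (false :: w ++ [true]) ->
      is_fixpt I phi0 phi1 ([false; true] ++ w) a ->
      is_fixpt I phi0 phi1 ([true; false] ++ w) b ->
      I x ->
      (threshold_word phi0 phi1 x (false :: w ++ [true]) <-> a <= x <= b)) /\
  (forall x, I x -> y0 <= x -> threshold_word phi0 phi1 x [false]) /\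
  (forall x, I x -> x <= y1 -> threshold_word phi0 phi1 x [true]).
Proof.
  split; [|split].
  - intros w a b x Hv [Ia Fa] [Ib Fb] Ix.
    assert (Hgap : cycle_gap I phi0 phi1 w).
    { destruct (valid_cycle_gap I HI _ Hv) as [H|[H|[w' [H Hw']]]].
      - injection H as H. now destruct w.
      - discriminate.
      - injection H as H. apply app_inj_tail in H as [<- _]. now apply (Hw' _ _ y0 y1). }
    apply (threshold_word_iff I phi0 phi1 y0 y1 HI HA2 w a b); auto.
    now apply valid_aperiodic.
  - exact (threshold_word_false I phi0 phi1 y0 y1 HA2).
  - exact (threshold_word_true I phi0 phi1 y0 y1 HA2).
Qed.
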